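(* Let $p$ be an odd prime and $a,s$ natural numbers with $a<p$. For every set partition $\delta$ of $\{1,\ldots,as\}$ into $s$ sets of size $a$, there are exactly $p^{(a-1)s}$ distinct set partitions of $\{1,\ldots,asp\}$ into $sp$ sets of size $a$ which are fixed by $R_{as}$ and have type $\delta$.
   Context: For $j\geq 1$ let $z_j=(p(j-1)+1,\ldots,pj)$ and $\mathcal{O}_j=\{p(j-1)+1,\ldots,pj\}$. Let $\sigma=z_1\cdots z_{as}\in S_{asp}$ (right actions) and $R_{as}=\langle\sigma\rangle$. Given a set partition $\delta=\{\delta_1,\ldots,\delta_s\}$ of $\{1,\ldots,as\}$ into sets of size $a$, a set partition $\omega$ of $\{1,\ldots,asp\}$ into $sp$ sets of size $a$ has type $\delta$ if there are sets $A_1,\ldots,A_s$ of size $a$ with $|A_i\cap\mathcal{O}_j|=1$ if $j\in\delta_i$ and $|A_i\cap\mathcal{O}_j|=0$ if $j\notin\delta_i$, such that $\omega=\{A_i\sigma^k : 1\leq i\leq s,\ 0\leq k\leq p-1\}$. Every set partition fixed by $R_{as}$ has a unique type. *)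

(* Points {1..asp} are encoded 0-indexed as 'I_(a*s*p):
   the point x (0-based) corresponds to x+1. *)
From mathcomp Require Import all_boot.
Set Implicit Arguments. Unset Strict Implicit. Unset Printing Implicit Defensive.

Definition orbitO (p a s : nat) (j : 'I_(a*s)) : {set 'I_(a*s*p)} :=
  [set x : 'I_(a*s*p) | x %/ p == j].

(* sigma = z_1 ... z_{as}: the p-cycle on each block O_j, x |-> next element
   of its block cyclically. *)
Definition sigma (p a s : nat) (x : 'I_(a*s*p)) : 'I_(a*s*p) :=
  insubd x (p * (x %/ p) + (x %% p).+1 %% p).

Definition is_set_partition (T : finType) (k a : nat) (w : {set {set T}}) : bool :=
  [&& partition w [set: T], #|w| == k & [forall B in w, #|B| == a]].

(* omega is fixed by R_{as} = <sigma> = {sigma^k : k < p}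
   (sets acted upon pointwise). *)
Definition fixed_by_R (p a s : nat) (w : {set {set 'I_(a*s*p)}}) : bool :=
  [forall k : 'I_p, [set [set iter k (@sigma p a s) x | x in B] | B : {set 'I_(a*s*p)} in w] == w].

Definition has_type (p a s : nat) (delta : {set {set 'I_(a*s)}})
    (w : {set {set 'I_(a*s*p)}}) : bool :=
  [exists A : {ffun {set 'I_(a*s)} -> {set 'I_(a*s*p)}},
     [forall d in delta,
        (#|A d| == a) &&
        [forall j : 'I_(a*s), #|A d :&: @orbitO p a s j| == (j \in d)]]
     && (w == [set [set iter k (@sigma p a s) x | x in A d] | d : {set 'I_(a*s)} in delta, k : 'I_p in [set: 'I_p]])].

(* Write the point of O_j at position r as [point j r], with r in Z/p, so that sigma^k adds k
   to r. A set A meeting O_j in one point for j in d and nowhere else is then the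
   graph [slice c d] of an offset function c on d, and its sigma-translates are the slices of c + k.
   Hence every c : {1..as} -> Z/p yields a fixed partition of type delta, all of them arise this
   way, and c, c' yield the same partition iff they differ by a constant on each block of delta.
   Requiring c to vanish on a transversal of delta gives a normal form, so the count is
   p^(as - s). *)

From mathcomp Require Import all_boot ssralg zmodp zify.
Set Implicit Arguments. Unset Strict Implicit. Unset Printing Implicit Defensive.
Import GRing.Theory.

Section Coordinates.
Variables q a s : nat.
Local Notation p := q.+1.
Local Notation n := (a * s).
Local Notation N := (a * s * p).
Implicit Types (i j : 'I_n) (r t k : 'I_p) (x : 'I_N) (d : {set 'I_n}).
Implicit Types (c : {ffun 'I_n -> 'I_p}) (B : {set 'I_N}).

Lemma point_subproof j r : j * p + r < N.
Proof. by have := ltn_ord j; have := ltn_ord r; nia. Qed.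

Definition point j r : 'I_N := Ordinal (point_subproof j r).

Lemma block_subproof x : x %/ p < n.
Proof. by rewrite ltn_divLR. Qed.

Definition block x : 'I_n := Ordinal (block_subproof x).
Definition offset x : 'I_p := inZp x.

Lemma block_point j r : block (point j r) = j.
Proof. by apply: val_inj; rewrite /= divnMDl // divn_small // addn0. Qed.

Lemma offset_point j r : offset (point j r) = r.
Proof. by apply: val_inj; rewrite /= modnMDl modn_small. Qed.

Lemma point_block_offset x : point (block x) (offset x) = x.
Proof. by apply: val_inj; rewrite /= -divn_eq. Qed.

Lemma point_eq i j r t : (point i r == point j t) = (i == j) && (r == t).
Proof.
apply/eqP/idP => [eq_pt | /andP[/eqP-> /eqP->] //].
move: (block_point i r) (offset_point i r).
by rewrite eq_pt block_point offset_point => -> ->; rewrite !eqxx.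
Qed.

Lemma setP_point B B' :
  (forall j r, (point j r \in B) = (point j r \in B')) -> B = B'.
Proof. by move=> E; apply/setP => x; rewrite -(point_block_offset x) E. Qed.

Lemma mem_orbitO i x : (x \in @orbitO p a s i) = (block x == i).
Proof. by rewrite inE. Qed.

Lemma sigmaE x : @sigma p a s x = point (block x) (offset x + Zp1)%R.
Proof.
apply: val_inj; rewrite /sigma val_insubd /= modnDmr addn1 mulnC ifT //.
exact: point_subproof (block x) (inZp (x %% p).+1).
Qed.

Lemma iter_sigmaE m x : iter m (@sigma p a s) x = point (block x) (offset x + inZp m)%R.
Proof.
elim: m => [|m IHm].
  by rewrite -[LHS]point_block_offset; congr point; apply: val_inj; rewrite /= addn0 modn_mod.
rewrite iterS IHm sigmaE block_point offset_point -addrA; congr (point _ (_ + _)%R).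
by apply: val_inj; rewrite /= modnDmr modnDml addn1.
Qed.

Definition slice c d : {set 'I_N} := [set x | (block x \in d) && (offset x == c (block x))].
Definition shift k c : {ffun 'I_n -> 'I_p} := [ffun j => c j + k]%R.

Lemma mem_slice_point c d j r : (point j r \in slice c d) = (j \in d) && (r == c j).
Proof. by rewrite inE block_point offset_point. Qed.

Lemma slice_graph c d : slice c d = [set point j (c j) | j in d].
Proof.
apply: setP_point => j r; rewrite mem_slice_point.
apply/andP/imsetP => [[jd /eqP->] | [i id /eqP]]; first by exists j.
by rewrite point_eq => /andP[/eqP-> /eqP->].
Qed.

Lemma card_slice c d : #|slice c d| = #|d|.
Proof.
rewrite slice_graph card_imset // => i j /eqP.
by rewrite point_eq => /andP[/eqP].
Qed.

Lemma eq_slice c c' d : {in d, c =1 c'} -> slice c d = slice c' d.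
Proof. by move=> eq_cc'; rewrite !slice_graph; apply: eq_in_imset => j /eq_cc'->. Qed.

Lemma iter_slice k c d : [set iter k (@sigma p a s) x | x in slice c d] = slice (shift k c) d.
Proof.
rewrite !slice_graph -imset_comp; apply: eq_imset => j.
by rewrite /= iter_sigmaE block_point offset_point valZpK ffunE.
Qed.

Lemma shiftD k t c : shift k (shift t c) = shift (t + k)%R c.
Proof. by apply/ffunP => j; rewrite !ffunE addrA. Qed.

Lemma shift0 c : shift 0%R c = c.
Proof. by apply/ffunP => j; rewrite ffunE addr0. Qed.

Lemma sliceI_orbitO c d j :
  slice c d :&: @orbitO p a s j = if j \in d then [set point j (c j)] else set0.
Proof.
apply: setP_point => i r; rewrite inE mem_slice_point mem_orbitO block_point.
have [-> | ne_ij] := eqVneq i j.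
  by case: ifP; rewrite !inE ?point_eq ?eqxx ?andbT.
by case: ifP; rewrite ?inE ?point_eq ?(negbTE ne_ij) andbF.
Qed.

Lemma card_sliceI_orbitO c d j : #|slice c d :&: @orbitO p a s j| = (j \in d).
Proof. by rewrite sliceI_orbitO; case: (j \in d); rewrite ?cards1 ?cards0. Qed.

Definition offsets B : {ffun 'I_n -> 'I_p} :=
  [ffun j => odflt 0%R (omap offset [pick x in B :&: @orbitO p a s j])].

Lemma slice_offsets B d :
  (forall j, #|B :&: @orbitO p a s j| = (j \in d)) -> B = slice (offsets B) d.
Proof.
move=> cardB; apply: setP_point => j r; rewrite mem_slice_point.
have mem_BO : (point j r \in B) = (point j r \in B :&: @orbitO p a s j).
  by rewrite inE mem_orbitO block_point eqxx andbT.
have := cardB j; case: (j \in d) => /=; last first.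
  by move/cards0_eq; rewrite mem_BO => ->; rewrite inE.
move/eqP/cards1P=> [y BOy]; have : y \in B :&: @orbitO p a s j by rewrite BOy set11.
rewrite inE mem_orbitO => /andP[_ /eqP yj].
have -> : offsets B j = offset y.
  by rewrite ffunE; case: pickP => [z | /(_ y)]; rewrite BOy inE ?eqxx // => /eqP->.
by rewrite mem_BO BOy inE -{1}(point_block_offset y) yj point_eq eqxx.
Qed.

End Coordinates.

Section Slices.
Variables (q a s : nat) (delta : {set {set 'I_(a * s)}}).
Hypothesis a_gt0 : 0 < a.
Hypothesis delta_partition : is_set_partition s a delta.
Local Notation p := q.+1.
Local Notation n := (a * s).
Local Notation N := (a * s * p).
Local Notation slice := (@slice q a s).
Local Notation shift := (@shift q a s).
Implicit Types (i j : 'I_n) (k : 'I_p) (d e : {set 'I_n}) (c : {ffun 'I_n -> 'I_p}).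

Lemma partition_delta : partition delta [set: 'I_n].
Proof. by case/and3P: delta_partition. Qed.

Lemma trivI_delta : trivIset delta.
Proof. by case/and3P: partition_delta. Qed.

Lemma card_delta : #|delta| = s.
Proof. by case/and3P: delta_partition => _ /eqP. Qed.

Lemma card_block d : d \in delta -> #|d| = a.
Proof. by case/and3P: delta_partition => _ _ /forall_inP cardP /cardP/eqP. Qed.

Lemma block_witness d : d \in delta -> exists j, j \in d.
Proof. by move=> dD; apply/set0Pn; rewrite -card_gt0 card_block. Qed.

Lemma pblock_delta j : pblock delta j \in delta.
Proof. by apply: pblock_mem; case/and3P: partition_delta => /eqP->. Qed.

Lemma mem_pblock_delta j : j \in pblock delta j.
Proof. by rewrite mem_pblock; case/and3P: partition_delta => /eqP->. Qed.

Lemma same_block d e j : d \in delta -> e \in delta -> j \in d -> j \in e -> d = e.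
Proof.
by move=> dD eD jd je; rewrite -(def_pblock trivI_delta dD jd) (def_pblock trivI_delta eD je).
Qed.

Lemma slice_inj c c' d e j : d \in delta -> e \in delta -> j \in d ->
  slice c d = slice c' e -> e = d /\ c j = c' j.
Proof.
move=> dD eD jd eq_slices.
have : point j (c j) \in slice c' e by rewrite -eq_slices mem_slice_point jd eqxx.
by rewrite mem_slice_point => /andP[je /eqP->]; split; first exact: same_block eD dD je jd.
Qed.

Definition slices c : {set {set 'I_N}} :=
  [set slice (shift k c) d | d : {set 'I_n} in delta, k : 'I_p in [set: 'I_p]].

Lemma partition_slices c : partition (slices c) [set: 'I_N].
Proof.
apply/and3P; split.
- apply/eqP/setP => x; rewrite inE; apply/bigcupP.
  exists (slice (shift (offset x - c (block x))%R c) (pblock delta (block x))).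
    by apply/imset2P; exists (pblock delta (block x)) (offset x - c (block x))%R;
      rewrite ?pblock_delta.
  by rewrite inE mem_pblock_delta ffunE addrC subrK eqxx.
- apply/trivIsetP => _ _ /imset2P[d k dD _ ->] /imset2P[e t eD _ ->].
  apply: contraR; rewrite -setI_eq0 => /set0Pn[x].
  rewrite !inE ffunE ffunE => /andP[/andP[xd /eqP xk] /andP[xe /eqP xt]].
  by rewrite (same_block dD eD xd xe) (addrI _ (etrans (esym xk) xt)).
- apply/imset2P => -[d k dD _ /(congr1 (fun B : {set _} => #|B|))].
  by rewrite cards0 card_slice card_block // => a0; move: a_gt0; rewrite -a0.
Qed.

Lemma card_slices c : #|slices c| = s * p.
Proof.
rewrite /slices curry_imset2X card_in_imset ?cardsX ?cardsT ?card_ord ?card_delta //.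
move=> [d k] [e t]; rewrite !inE /= => /andP[dD _] /andP[eD _].
have [j jd] := block_witness dD.
by case/(slice_inj dD eD jd) => -> /=; rewrite !ffunE => /addrI->.
Qed.

Lemma is_set_partition_slices c : is_set_partition (s * p) a (slices c).
Proof.
rewrite /is_set_partition partition_slices card_slices eqxx /=.
by apply/forall_inP => _ /imset2P[d k dD _ ->]; rewrite card_slice card_block.
Qed.

Lemma fixed_by_R_slices c : @fixed_by_R p a s (slices c).
Proof.
apply/forallP => m; apply/eqP/setP => B.
apply/imsetP/imset2P => [[_ /imset2P[d k dD _ ->] ->] | [d k dD _ ->]].
  by exists d (k + m)%R; rewrite // iter_slice shiftD.
exists (slice (shift (k - m)%R c) d); first by apply/imset2P; exists d (k - m)%R.
by rewrite iter_slice shiftD subrK.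
Qed.

Lemma has_typeP w : reflect (exists c, w = slices c) (@has_type p a s delta w).
Proof.
apply: (iffP existsP) => [[A /andP[/forall_inP typeA /eqP->]] | [c ->]].
  exists [ffun j => offsets (A (pblock delta j)) j]; apply: eq_in_imset2 => d k dD _.
  have /andP[_ /forallP cardAO] := typeA d dD.
  rewrite (slice_offsets (fun j => eqP (cardAO j))) iter_slice.
  by apply: eq_slice => j jd; rewrite !ffunE (def_pblock trivI_delta dD jd).
exists [ffun d => slice c d]; apply/andP; split.
  apply/forall_inP => d dD; rewrite ffunE card_slice card_block // eqxx /=.
  by apply/forallP => j; rewrite card_sliceI_orbitO.
by apply/eqP; apply: eq_in_imset2 => d k _ _; rewrite ffunE iter_slice.
Qed.

Local Notation X := (transversal delta [set: 'I_n]).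

Definition rep j := transversal_repr j X (pblock delta j).

Lemma setI_transversal_rep d j : d \in delta -> j \in d -> X :&: d = [set rep j].
Proof.
move=> dD jd; rewrite /rep (def_pblock trivI_delta dD jd).
exact: setI_transversal_pblock (transversalP partition_delta) j d dD.
Qed.

Lemma rep_eq d i j : d \in delta -> i \in d -> j \in d -> rep i = rep j.
Proof. by move=> dD id jd; apply: set1_inj; rewrite -!(setI_transversal_rep dD). Qed.

Lemma rep_mem j : rep j \in X :&: pblock delta j.
Proof. by rewrite (setI_transversal_rep (pblock_delta j) (mem_pblock_delta j)) set11. Qed.

Lemma rep_id j : j \in X -> rep j = j.
Proof.
move=> jX; apply/esym/set1P; rewrite -(setI_transversal_rep (pblock_delta j)) ?mem_pblock_delta //.
by rewrite inE jX mem_pblock_delta.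
Qed.

Definition normalize c : {ffun 'I_n -> 'I_p} := [ffun j => c j - c (rep j)]%R.
Definition normal_offsets : {set {ffun 'I_n -> 'I_p}} :=
  [set c : {ffun 'I_n -> 'I_p} | [forall j in X, c j == 0%R]].

Lemma normalize_normal_offsets c : normalize c \in normal_offsets.
Proof. by rewrite inE; apply/forall_inP => j jX; rewrite ffunE rep_id ?subrr. Qed.

Lemma slice_shift_normalize c k d j : d \in delta -> j \in d ->
  slice (shift k (normalize c)) d = slice (shift (k - c (rep j))%R c) d.
Proof.
move=> dD jd; apply: eq_slice => i id.
by rewrite !ffunE (rep_eq dD id jd) addrA addrAC.
Qed.

Lemma slices_normalize c : slices (normalize c) = slices c.
Proof.
apply/setP => B; apply/imset2P/imset2P => -[d k dD _ ->]; have [j jd] := block_witness dD.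
  by exists d (k - c (rep j))%R; rewrite // (slice_shift_normalize _ _ dD jd).
by exists d (k + c (rep j))%R; rewrite // (slice_shift_normalize _ _ dD jd) addrK.
Qed.

Lemma slices_inj : {in normal_offsets &, injective slices}.
Proof.
move=> c c'; rewrite !inE => /forall_inP c0 /forall_inP c'0 eq_slices.
apply/ffunP => j; have dD := pblock_delta j; have jd := mem_pblock_delta j.
have /setIP[rX rd] := rep_mem j.
have : slice c (pblock delta j) \in slices c'.
  by rewrite -eq_slices; apply/imset2P; exists (pblock delta j) 0%R; rewrite ?shift0.
case/imset2P => e k eD _ eq_slice_k.
have [_ ->] := slice_inj dD eD jd eq_slice_k.
have [_] := slice_inj dD eD rd eq_slice_k.
by rewrite !ffunE (eqP (c0 _ rX)) (eqP (c'0 _ rX)) add0r => <-; rewrite addr0.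
Qed.

Lemma card_normal_offsets : #|normal_offsets| = p ^ ((a - 1) * s).
Proof.
have -> : #|normal_offsets| = #|pffun_on 0%R (~: X) [set: 'I_p]|.
  apply: eq_card => c; rewrite inE; apply/forall_inP/pffun_onP => [c0 | [supp _] j jX].
    split=> [|j _]; last by rewrite inE.
    by apply/subsetP => j; rewrite !inE; apply: contra => /c0.
  by apply/negPn/negP => cj; move: (subsetP supp j); rewrite !inE jX => /(_ cj).
rewrite card_pffun_on cardsT card_ord cardsCs setCK card_ord.
by rewrite (card_transversal (transversalP partition_delta)) card_delta mulnBl mul1n.
Qed.

Lemma fixed_partitions_of_type :
  [set w : {set {set 'I_N}} |
     [&& is_set_partition (s * p) a w, @fixed_by_R p a s w & @has_type p a s delta w]]
  = slices @: normal_offsets.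
Proof.
apply/setP => w; rewrite inE; apply/and3P/imsetP => [[_ _ /has_typeP[c ->]] | [c _ ->]].
  by exists (normalize c); rewrite ?normalize_normal_offsets ?slices_normalize.
split; [exact: is_set_partition_slices | exact: fixed_by_R_slices |].
by apply/has_typeP; exists c.
Qed.

Lemma card_fixed_partitions_of_type :
  #|[set w : {set {set 'I_N}} |
      [&& is_set_partition (s * p) a w, @fixed_by_R p a s w & @has_type p a s delta w]]|
  = p ^ ((a - 1) * s).
Proof.
by rewrite fixed_partitions_of_type card_in_imset ?card_normal_offsets //; exact: slices_inj.
Qed.

End Slices.

Theorem lemma3p3 (p a s : nat) :
  prime p -> odd p -> 0 < a -> a < p ->
  forall delta : {set {set 'I_(a*s)}},
    is_set_partition s a delta ->
    #|[set w : {set {set 'I_(a*s*p)}} |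
         [&& is_set_partition (s*p) a w, @fixed_by_R p a s w & @has_type p a s delta w]]|
    = p ^ ((a - 1) * s).
Proof.
move=> /prime_gt0; case: p => // q _ _ a_gt0 _ delta delta_partition.
exact: card_fixed_partitions_of_type.
Qed.
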